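(* Let $k\ge 1$ and $n\ge 1$ be integers and let $$D_n(k,x)=\left(\binom{i+k-1}{j+k-1}x^k-\binom{i}{j-1}\right)_{i,j=0}^{n-1}.$$ Then $\det D_n(k,x)=x^nF^{(k)}_{(k-1)n}(x)$.
   Context: Binomial coefficients: for integers $m\ge 0$ and $j$, $\binom{m}{j}$ is the usual binomial coefficient, with $\binom{m}{j}=0$ if $j<0$ or $j>m$. For an integer $k\ge1$, the generalized Fibonacci polynomials $F^{(k)}_n(x)\in\mathbb{Z}[x]$ ($n\ge0$) are defined by $F^{(k)}_n(x)=x^n$ for $0\le n<k$ and $F^{(k)}_n(x)=xF^{(k)}_{n-1}(x)+F^{(k)}_{n-k}(x)$ for $n\ge k$. *)

From HB Require Import structures.
From mathcomp Require Import all_boot all_order all_algebra.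
Set Implicit Arguments. Unset Strict Implicit. Unset Printing Implicit Defensive.
Import Order.TTheory GRing.Theory Num.Theory.
Local Open Scope ring_scope.

(* fibseq k n = [:: F_0; F_1; ...; F_n] for the generalized Fibonacci
   polynomials F^(k) in Z[x]. *)
Fixpoint fibseq (k : nat) (n : nat) : seq {poly int} :=
  match n with
  | 0 => [:: 1]
  | m.+1 =>
      let s := fibseq k m in
      let new := if (n < k)%N then 'X^n
                 else 'X * nth 0 s m + nth 0 s (n - k)%N in
      rcons s new
  end.

Definition genFib (k n : nat) : {poly int} := nth 0 (fibseq k n) n.

Definition binz (m : nat) (j : int) : nat :=
  match j with Posz j' => 'C(m, j') | Negz _ => 0%N end.

Definition Dmat (k n : nat) : 'M[{poly int}]_n :=
  \matrix_(i < n, j < n)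
    (('C(i + k - 1, j + k - 1))%:R * 'X^k - (binz i (j%:Z - 1))%:R).

From HB Require Import structures.
From mathcomp Require Import all_boot all_order all_algebra.
From mathcomp Require Import zify ring.
Import GRing.Theory.
Local Open Scope ring_scope.

(* Write k = c + 1.  Vandermonde's identity
   C(i + c, j + c) = sum_l C(i, l) C(c, j + c - l) factors D_n as P B, with P
   the unitriangular Pascal matrix and B = x^k (C(c, j + c - l))_(l,j) - shift.
   Iterating F_(t+1) = x F_t + F_(t-c) c times gives
   F_(c(i+1)) = sum_d C(c, d) x^(c-d) F_(c(i-d)), which says exactly that B
   kills the vector v = (x^l F_(cl))_l except in its last row, where it yields
   x^n F_(cn).  As v_0 = 1, adding B v to the first column of B does not change
   the determinant, and expanding along that column leaves x^n F_(cn) times a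
   triangular minor with -1 on its diagonal. *)

Lemma big_ord_widen_idx (R : Type) (idx : R) (op : Monoid.law idx) (F : nat -> R) n m :
  (n <= m)%N -> (forall d, (n <= d < m)%N -> F d = idx) ->
  \big[op/idx]_(d < n) F d = \big[op/idx]_(d < m) F d.
Proof.
move=> le_nm F0; rewrite (big_ord_widen _ _ le_nm) big_mkcond.
by apply: eq_bigr => d _; case: (ltnP d n) => // le_nd; rewrite F0 ?le_nd ?ltn_ord.
Qed.

Section GenFib.
Variable k : nat.

Lemma size_fibseq n : size (fibseq k n) = n.+1.
Proof. by elim: n => [|n IH] //=; rewrite size_rcons IH. Qed.

Lemma nth_fibseq n j : (j <= n)%N -> nth 0 (fibseq k n) j = genFib k j.
Proof.
elim: n => [|n IH]; first by rewrite leqn0 => /eqP ->.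
rewrite leq_eqVlt => /predU1P[-> //|lt_jn].
by rewrite /= nth_rcons size_fibseq lt_jn IH.
Qed.

Lemma genFib_small n : (n < k)%N -> genFib k n = 'X^n.
Proof.
case: n => [|n] lt_nk; first by rewrite expr0.
by rewrite /genFib /= nth_rcons size_fibseq ltnn eqxx lt_nk.
Qed.

Lemma genFib_rec n : (1 <= k <= n)%N ->
  genFib k n = 'X * genFib k n.-1 + genFib k (n - k).
Proof.
case: n => [|n] /andP[k_gt0 le_kn]; first by lia.
rewrite /genFib /= nth_rcons size_fibseq ltnn eqxx ltnNge le_kn /=.
by rewrite !nth_fibseq //; lia.
Qed.

End GenFib.

(* Extension by 0 to negative indices: the recurrence then holds at every t
   except t = -1, where it would give F_0 = 0. *)
Definition genFibz (k : nat) (t : int) : {poly int} :=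
  if t is Posz n then genFib k n else 0.

Lemma genFibz_nat k (t : int) n : t = n%:Z -> genFibz k t = genFib k n.
Proof. by move->. Qed.

Lemma genFibz_neg k (t : int) : t < 0 -> genFibz k t = 0.
Proof. by case: t. Qed.

Lemma genFibz_rec c (t : int) : t != -1 ->
  genFibz c.+1 (t + 1) = 'X * genFibz c.+1 t + genFibz c.+1 (t - c%:Z).
Proof.
move=> t_neq; have [t_neg|t_ge0] := boolP (t < 0).
  by rewrite !genFibz_neg ?mulr0 ?addr0 //; lia.
have [n ->] : exists n : nat, t = n%:Z by exists `|t|%N; lia.
rewrite (@genFibz_nat _ _ n.+1); last by lia.
have [lt_nc|le_cn] := ltnP n c.
  rewrite [genFibz _ (_ - _)]genFibz_neg ?addr0; last by lia.
  by rewrite /= !genFib_small ?exprS // ltnW.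
rewrite (@genFibz_nat _ (n%:Z - c%:Z) (n - c)); last by lia.
by rewrite genFib_rec ?subSS.
Qed.

Section LinearRecurrence.
Context {R : comRingType} {x : R} {s t0 : int} {f : int -> R}.
Hypothesis f_rec : forall t, t != t0 -> f (t + 1) = x * f t + f (t - s).

Lemma linear_recurrence_binomial a m :
  (forall j d : nat, (j + d < a)%N -> m - s * d%:Z + j%:Z != t0) ->
  f (m + a%:Z) = \sum_(d < a.+1) 'C(a, d)%:R * x ^+ (a - d) * f (m - s * d%:Z).
Proof.
elim: a m => [|a IH] m avoid.
  by rewrite big_ord1 /= expr0 mulr1 mul1r; congr f; lia.
have -> : m + a.+1%:Z = (m + 1) + a%:Z by lia.
rewrite IH => [|j d lt_jda]; last first.
  by rewrite (_ : _ + j%:Z = m - s * d%:Z + j.+1%:Z) ?avoid //; lia.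
have step (d : 'I_a.+1) :
    f (m + 1 - s * d%:Z) = x * f (m - s * d%:Z) + f (m - s * d.+1%:Z).
  rewrite (_ : m + 1 - _ = m - s * d%:Z + 1); last by lia.
  rewrite f_rec; last by have := avoid 0%N d (ltn_ord d); lia.
  by congr (_ + f _); lia.
rewrite (eq_bigr _ (fun d _ => congr1 _ (step d))).
under eq_bigr => d _.
  rewrite mulrDr mulrA -(mulrA _ (x ^+ _) x) -exprSr -subSn; last exact: ltn_ord d.
  over.
rewrite big_split /= big_ord_recl [in RHS]big_ord_recl -addrA.
congr (_ + _); first by rewrite !bin0.
under [X in X + _ = _]eq_bigr do rewrite lift0 subSS.
under [in RHS]eq_bigr do rewrite lift0 subSS binS natrD !mulrDl.
by rewrite big_split /= [X in _ = X + _]big_ord_recr /= bin_small // !mul0r addr0.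
Qed.
End LinearRecurrence.

Lemma genFib_mulS c i :
  genFib c.+1 (c * i.+1) =
  \sum_(d < i.+1) 'C(c, d)%:R * 'X^(c - d) * genFib c.+1 (c * (i - d)).
Proof.
pose T d := 'C(c, d)%:R * 'X^(c - d) * genFibz c.+1 (c%:Z * i%:Z - c%:Z * d%:Z).
have -> : genFib c.+1 (c * i.+1) = \sum_(d < c.+1) T d.
  rewrite -(@genFibz_nat _ (c%:Z * i%:Z + c%:Z)); last by rewrite mulnS; lia.
  rewrite (linear_recurrence_binomial (genFibz_rec c)) // => j d lt_jdc.
  have [le_di|lt_id] := leqP d i.
    have : (c * d <= c * i)%N by rewrite leq_mul2l le_di orbT.
    lia.
  have : (c * i.+1 <= c * d)%N by rewrite leq_mul2l lt_id orbT.
  lia.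
rewrite (@big_ord_widen_idx _ _ _ T c.+1 (c + i.+1)) => [||d /andP[lt_cd _]].
- rewrite -(@big_ord_widen_idx _ _ _ T i.+1) => [||d /andP[lt_id _]].
  + apply: eq_bigr => d _; rewrite /T (@genFibz_nat _ _ (c * (i - d))) //.
    have : (c * d <= c * i)%N by rewrite leq_mul2l -ltnS ltn_ord orbT.
    rewrite mulnBr; lia.
  + lia.
  + rewrite /T; case: c {T} => [|c]; first by rewrite bin_small ?mul0r //; lia.
    rewrite genFibz_neg ?mulr0 //.
    have : (c.+1 * i.+1 <= c.+1 * d)%N by rewrite leq_mul2l lt_id.
    lia.
- lia.
- by rewrite /T bin_small // !mul0r.
Qed.

Definition detDval c l : {poly int} := 'X^l * genFib c.+1 (c * l).

Lemma detDval_step c i N : (i < N)%N ->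
  'X^(c.+1) * \sum_(l < N) ((i <= l + c) * 'C(c, l + c - i))%:R * detDval c l =
  detDval c i.+1.
Proof.
move=> lt_iN.
pose F l := ((i <= l + c) * 'C(c, l + c - i))%:R * detDval c l.
rewrite -(@big_ord_widen_idx _ _ _ F i.+1 N) => [||l /andP[lt_il _]] //; last first.
  by rewrite /F bin_small ?muln0 ?mul0r //; lia.
rewrite /F /detDval genFib_mulS !mulr_sumr (reindex_inj rev_ord_inj) /=.
apply: eq_bigr => d _; rewrite subSS.
have le_di : (d <= i)%N by rewrite -ltnS.
have [le_dc|lt_cd] := leqP d c; last first.
  rewrite (_ : (i <= _)%N = false); last by lia.
  by rewrite mul0n mul0r mulr0 bin_small // !mul0r mulr0.
rewrite (_ : (i <= _)%N); last by lia.
rewrite mul1n (_ : (i - d + c - i = c - d)%N); last by lia.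
have Xe : 'X^(c.+1) * 'X^(i - d) = 'X^(i.+1) * 'X^(c - d) :> {poly int}.
  by rewrite -!exprD; congr 'X^_; lia.
rewrite bin_sub //.
transitivity ('C(c, d)%:R * ('X^(c.+1) * 'X^(i - d)) * genFib c.+1 (c * (i - d))).
  by ring.
by rewrite Xe; ring.
Qed.

Lemma Vandermonde_band c n i j : (i < n)%N ->
  (\sum_(l < n) 'C(i, l) * ((l <= j + c) * 'C(c, j + c - l)))%N = 'C(i + c, j + c).
Proof.
move=> lt_in; rewrite -binomial.Vandermonde.
pose F l := ('C(i, l) * ((l <= j + c) * 'C(c, j + c - l)))%N.
rewrite (@big_ord_widen_idx _ _ _ F n (n + (j + c).+1)) => [||l /andP[le_nl _]]; last 2 first.
- lia.
- by rewrite /F bin_small //; lia.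
rewrite -(@big_ord_widen_idx _ _ _ F (j + c).+1) => [||l /andP[lt_jcl _]]; last 2 first.
- lia.
- by rewrite /F (_ : (l <= j + c)%N = false) ?muln0 //; lia.
by apply: eq_bigr => l _; rewrite /F (_ : (l <= j + c)%N) ?mul1n // -ltnS.
Qed.

Definition pascal_mx {R : nzRingType} n : 'M[R]_n := \matrix_(i, l) 'C(i, l)%:R.

Definition Dband_mx c n : 'M[{poly int}]_n := \matrix_(l, j)
  ('X^(c.+1) * ((l <= j + c) * 'C(c, j + c - l))%:R - (l.+1 == j)%:R).

Lemma Dmat_pascal_factor c n : Dmat c.+1 n = pascal_mx n *m Dband_mx c n.
Proof.
apply/matrixP => i j; rewrite !mxE.
under eq_bigr do rewrite !mxE mulrBr.
rewrite sumrB; congr (_ - _).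
  under eq_bigr do rewrite mulrCA -natrM.
  by rewrite -mulr_sumr -natr_sum mulrC Vandermonde_band // !addnS !subn1.
case: j => [[|j] lt_jn] /=; first by rewrite big1 // => l _; rewrite mulr0.
rewrite (bigD1 (Ordinal (ltnW lt_jn))) //= eqxx mulr1 subn1 big1 ?addr0 // => l ne_lj.
rewrite eqSS (_ : (l == j :> nat) = false) ?mulr0 //.
by apply: contraNF ne_lj => /eqP l_j; apply/eqP/val_inj.
Qed.

Lemma det_pascal_mx (R : comRingType) n : \det (pascal_mx n : 'M[R]_n) = 1.
Proof.
rewrite det_trig; first by apply: big1 => i _; rewrite mxE binn.
by apply/is_trig_mxP => i j lt_ij; rewrite mxE bin_small.
Qed.

Lemma det_mulmx_col0 {R : comRingType} {n} (A : 'M[R]_n.+1) (u : 'cV[R]_n.+1) :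
  u ord0 ord0 = 1 ->
  \det (\matrix_(i, j) if j == ord0 then (A *m u) i ord0 else A i j) = \det A.
Proof.
move=> u00.
pose U : 'M[R]_n.+1 := \matrix_(i, j) if j == ord0 then u i ord0 else (i == j)%:R.
have detU : \det U = 1.
  rewrite det_trig; last first.
    apply/is_trig_mxP => i j lt_ij; rewrite mxE.
    have -> : (j == ord0) = false by rewrite -val_eqE /= eqn0Ngt (leq_ltn_trans _ lt_ij).
    by rewrite -val_eqE /= ltn_eqF.
  by apply: big1 => i _; rewrite mxE eqxx; case: eqP => [->|].
rewrite -[RHS]mulr1 -detU -det_mulmx; congr (\det _); apply/matrixP => i j; rewrite !mxE.
case: eqP => [->|/eqP nz_j].
  by apply: eq_bigr => l _; rewrite mxE.
rewrite (bigD1 j) //= big1 ?addr0 => [|l ne_lj]; rewrite mxE (negbTE nz_j).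
  by rewrite eqxx mulr1.
by rewrite (negbTE ne_lj) mulr0.
Qed.

Lemma det_mulmx_col0_delta {R : comRingType} {n} (A : 'M[R]_n.+1) (u : 'cV[R]_n.+1) a :
  u ord0 ord0 = 1 -> (forall i, (A *m u) i ord0 = (i == ord_max)%:R * a) ->
  \det A = (-1) ^+ n * a * \det (row' ord_max (col' ord0 A)).
Proof.
move=> u00 Au; rewrite -(det_mulmx_col0 A u u00) (expand_det_col _ ord0) big_ord_recr /=.
rewrite big1 ?add0r => [|i _]; last by rewrite mxE eqxx Au -val_eqE /= ltn_eqF ?mul0r.
rewrite mxE eqxx Au eqxx mul1r /cofactor /= addn0 mulrCA mulrA; congr (_ * \det _).
by apply/matrixP => i j; rewrite !mxE.
Qed.

Lemma Dband_mul_detDval c n (i : 'I_n.+1) :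
  (Dband_mx c n.+1 *m \col_l detDval c l) i ord0 = (i == ord_max)%:R * detDval c n.+1.
Proof.
rewrite mxE; under eq_bigr do rewrite !mxE mulrBl -mulrA.
rewrite sumrB -mulr_sumr detDval_step //.
have [->|ne_i] := eqVneq i ord_max.
  by rewrite big1 ?subr0 ?mul1r // => l _; rewrite gtn_eqF ?mul0r.
have lt_in : (i.+1 < n.+1)%N.
  by move: ne_i; rewrite -val_eqE ltnS ltn_neqAle => ->; rewrite -ltnS ltn_ord.
rewrite (bigD1 (Ordinal lt_in)) //= eqxx mul1r big1 ?addr0 ?subrr ?mul0r // => l ne_l.
rewrite (_ : i.+1 == l = false) ?mul0r //.
by apply: contraNF ne_l => /eqP i_l; apply/eqP/val_inj.
Qed.

Lemma det_Dband_minor c n : \det (row' ord_max (col' ord0 (Dband_mx c n.+1))) = (-1) ^+ n.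
Proof.
have minorE (a b : 'I_n) : row' ord_max (col' ord0 (Dband_mx c n.+1)) a b =
    'X^(c.+1) * ((a <= b.+1 + c) * 'C(c, b.+1 + c - a))%:R - (a == b :> nat)%:R.
  by rewrite !mxE /= /bump (leqNgt n a) ltn_ord add0n add1n eqSS.
rewrite det_trig; last first.
  apply/is_trig_mxP => /= a b lt_ab.
  by rewrite minorE bin_small ?ltn_eqF ?muln0 ?mulr0 ?subr0 //; lia.
rewrite (eq_bigr (fun=> -1)) ?prodr_const ?card_ord // => a _.
by rewrite minorE bin_small ?muln0 ?mulr0 ?eqxx ?sub0r //; lia.
Qed.

Lemma det_Dband_mx c n : \det (Dband_mx c n.+1) = detDval c n.+1.
Proof.
rewrite (det_mulmx_col0_delta _ (\col_l detDval c l) _ _ (Dband_mul_detDval c n)).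
  by rewrite det_Dband_minor mulrC mulrA -exprD addnn -mul2n exprM sqrrN !expr1n mul1r.
by rewrite mxE /detDval muln0 genFib_small // mulr1.
Qed.

Theorem theorem4 (k n : nat) (hk : (1 <= k)%N) (hn : (1 <= n)%N) :
  \det (Dmat k n) = 'X^n * genFib k ((k - 1) * n)%N.
Proof.
case: k hk => [|c] // _; case: n hn => [|n] // _.
by rewrite Dmat_pascal_factor det_mulmx det_pascal_mx mul1r det_Dband_mx subn1.
Qed.
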